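(* Let $N\ge 1$ and let $\boldsymbol{R}\in\mathbb{C}^{N\times N}$ be Hermitian and positive semi-definite, with eigenvalues $\lambda_1\le\cdots\le\lambda_N$, where $\lambda_N>0$. Let $\boldsymbol{e}_N$ be a unit-norm eigenvector of $\boldsymbol{R}$ for the eigenvalue $\lambda_N$, and let $\boldsymbol{d}\in\Omega^N$ be defined by $\boldsymbol{d}(i)=e^{j\arg(\boldsymbol{e}_N(i))}$ if $\boldsymbol{e}_N(i)\neq 0$ and $\boldsymbol{d}(i)=e^{j0}=1$ if $\boldsymbol{e}_N(i)=0$. Let $V_{\mathcal{D}}=\boldsymbol{d}^H\boldsymbol{R}\boldsymbol{d}$ and $V_{opt}=\max_{\boldsymbol{s}\in\Omega^N}\boldsymbol{s}^H\boldsymbol{R}\boldsymbol{s}$. Then \[ \frac{V_{\mathcal{D}}}{V_{opt}}\ \ge\ \frac{\lambda_N+(N-1)\lambda_1}{\lambda_N N}. \]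
   Context: $\Omega=\{x\in\mathbb{C}: |x|=1\}$ is the complex unit circle and $j$ is the imaginary unit. $\arg(x)$ denotes the argument of a complex number $x$, and $\boldsymbol{e}_N(i)$ is the $i$th entry of $\boldsymbol{e}_N$. The vector $\boldsymbol{d}$ is the output of the ''dominant-eigenvector-matching'' heuristic for the unimodular quadratic program $\max_{\boldsymbol{s}\in\Omega^N}\boldsymbol{s}^H\boldsymbol{R}\boldsymbol{s}$. *)

From HB Require Import structures.
From mathcomp Require Import all_boot all_order all_algebra.
From mathcomp Require Import complex.
Set Implicit Arguments. Unset Strict Implicit. Unset Printing Implicit Defensive.
Import Order.TTheory GRing.Theory Num.Theory.
Local Open Scope ring_scope.

Section Defs.
Variable R : rcfType.
Local Notation C := R[i].

Definition ctrmx (m n : nat) (A : 'M[C]_(m, n)) : 'M[C]_(n, m) :=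
  (map_mx (fun z : C => z^*) A)^T.

Definition is_hermitian (N : nat) (A : 'M[C]_N) : Prop := ctrmx A = A.

Definition qform (N : nat) (A : 'M[C]_N) (v : 'cV[C]_N) : C :=
  (ctrmx v *m A *m v) 0 0.

Definition is_psd (N : nat) (A : 'M[C]_N) : Prop :=
  forall v : 'cV[C]_N, 0 <= qform A v.

Definition is_eigenvalue (N : nat) (A : 'M[C]_N) (a : C) : Prop :=
  exists v : 'cV[C]_N, v != 0 /\ A *m v = a *: v.

Definition unimodular (N : nat) (s : 'cV[C]_N) : Prop :=
  forall i, `|s i 0| = 1.

(* e^{j arg z} for z <> 0, and e^{j0} = 1 for z = 0 *)
Definition phase (z : C) : C := if z == 0 then 1 else z / `|z|.

Definition dem_vec (N : nat) (e : 'cV[C]_N) : 'cV[C]_N :=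
  \col_i phase (e i 0).

End Defs.

From HB Require Import structures.
From mathcomp Require Import all_boot all_order all_algebra.
From mathcomp Require Import complex spectral sesquilinear ring.
Set Implicit Arguments. Unset Strict Implicit. Unset Printing Implicit Defensive.
Import Order.TTheory GRing.Theory Num.Theory.
Local Open Scope ring_scope.

(* Write d = a e_N + f with f orthogonal to e_N and a = <e_N, d> = sum_i |e_N(i)|.
   Since e_N is a unit vector, a >= sum_i |e_N(i)|^2 = 1, and as e_N is an
   eigenvector the cross terms vanish, so
   V_D = a^2 lam_N + f^H R f >= a^2 lam_N + lam_1 (N - a^2) >= lam_N + (N - 1) lam_1.
   On the other hand the Rayleigh bound gives V_opt <= lam_N |s|^2 = lam_N N. *)

Section QuadraticForms.
Variable R : rcfType.
Local Notation C := R[i].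

Lemma ctrmxE m n (A : 'M[C]_(m, n)) : ctrmx A = (A ^t* )%sesqui.
Proof. by rewrite /ctrmx map_trmx. Qed.

Lemma ctrmx_mul m n p (A : 'M[C]_(m, n)) (B : 'M[C]_(n, p)) :
  ctrmx (A *m B) = ctrmx B *m ctrmx A.
Proof. by rewrite /ctrmx map_mxM trmx_mul. Qed.

Lemma ctrmxK m n (A : 'M[C]_(m, n)) : ctrmx (ctrmx A) = A.
Proof. by apply/matrixP => i j; rewrite !mxE conjCK. Qed.

Lemma hermitian_normalmx n (A : 'M[C]_n) : is_hermitian A -> A \is normalmx.
Proof. by move=> hA; apply/normalmxP; rewrite -ctrmxE hA. Qed.

Definition dot n (u v : 'cV[C]_n) : C := (ctrmx u *m v) 0 0.

Lemma dotE n (u v : 'cV[C]_n) : dot u v = \sum_i (u i 0)^* * v i 0.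
Proof. by rewrite /dot mxE; apply: eq_bigr => i _; rewrite !mxE. Qed.

Lemma dotC n (u v : 'cV[C]_n) : dot u v = (dot v u)^*.
Proof.
rewrite !dotE rmorph_sum; apply: eq_bigr => i _.
by rewrite rmorphM /= conjCK mulrC.
Qed.

Lemma dotDr n (u v w : 'cV[C]_n) : dot u (v + w) = dot u v + dot u w.
Proof. by rewrite !dotE -big_split; apply: eq_bigr => i _; rewrite mxE mulrDr. Qed.

Lemma dotZr n a (u v : 'cV[C]_n) : dot u (a *: v) = a * dot u v.
Proof. by rewrite !dotE mulr_sumr; apply: eq_bigr => i _; rewrite mxE mulrCA. Qed.

Lemma dotBr n (u v w : 'cV[C]_n) : dot u (v - w) = dot u v - dot u w.
Proof. by rewrite dotDr -scaleN1r dotZr mulN1r. Qed.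

Lemma dotDl n (u v w : 'cV[C]_n) : dot (v + w) u = dot v u + dot w u.
Proof. by rewrite dotC dotDr rmorphD /= -!dotC. Qed.

Lemma dotZl n a (u v : 'cV[C]_n) : dot (a *: v) u = a^* * dot v u.
Proof. by rewrite dotC dotZr rmorphM /= -dotC. Qed.

Lemma dot_adj n (A : 'M[C]_n) u v : dot u (A *m v) = dot (ctrmx A *m u) v.
Proof. by rewrite /dot ctrmx_mul ctrmxK mulmxA. Qed.

Lemma dotvv n (v : 'cV[C]_n) : dot v v = \sum_i `|v i 0| ^+ 2.
Proof. by rewrite dotE; apply: eq_bigr => i _; rewrite normCK mulrC. Qed.

Lemma dotvv_gt0 n (v : 'cV[C]_n) : v != 0 -> 0 < dot v v.
Proof.
move=> v_neq0; have sq_ge0 (k : 'I_n) : true -> 0 <= `|v k 0| ^+ 2.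
  by rewrite exprn_ge0.
rewrite lt_def dotvv sumr_ge0 // andbT.
apply: contraNneq v_neq0 => /psumr_eq0P-/(_ sq_ge0) v0.
apply/eqP/matrixP => i j; rewrite ord1 mxE.
by apply/eqP; rewrite -normr_eq0 -sqrf_eq0 v0.
Qed.

Lemma qformE n (A : 'M[C]_n) v : qform A v = dot v (A *m v).
Proof. by rewrite /qform /dot mulmxA. Qed.

Lemma unimodular_dotvv n (s : 'cV[C]_n) : unimodular s -> dot s s = n%:R.
Proof.
move=> s1; rewrite dotvv (eq_bigr (fun _ => 1)) => [|i _]; last first.
  by rewrite s1 expr1n.
by rewrite sumr_const card_ord.
Qed.

Section Spectral.
Variables (n : nat) (A : 'M[C]_n).
Hypothesis A_normal : A \is normalmx.
Let P := spectralmx A.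
Let D := spectral_diag A.

Lemma spectral_ctrmxK : ctrmx P *m P = 1%:M.
Proof.
by rewrite ctrmxE -[LHS]mul1mx mulmxA mulmxKtV // spectral_unitarymx.
Qed.

Lemma spectral_decomposition : A = ctrmx P *m diag_mx D *m P.
Proof.
by rewrite ctrmxE -invmx_unitary ?spectral_unitarymx //; apply/orthomx_spectralP.
Qed.

Lemma spectral_diag_eigenvalue k : is_eigenvalue A (D 0 k).
Proof.
have PPt : P *m ctrmx P = 1%:M by rewrite ctrmxE; apply/unitarymxP/spectral_unitarymx.
exists (col k (ctrmx P)); split.
  apply/eqP => /(congr1 (mulmx P)) /matrixP /(_ k 0).
  by rewrite colE mulmxA PPt mul1mx mulmx0 !mxE eqxx /= => /eqP; rewrite oner_eq0.
rewrite {1}spectral_decomposition colE -!mulmxA (mulmxA P) PPt mul1mx.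
rewrite mulmxA mul_mx_diag -!colE.
by apply/matrixP => i j; rewrite !mxE mulrC.
Qed.

Lemma dotvv_spectral v : dot v v = \sum_k `|(P *m v) k 0| ^+ 2.
Proof. by rewrite -dotvv dot_adj mulmxA spectral_ctrmxK mul1mx. Qed.

Lemma qform_spectral v : qform A v = \sum_k D 0 k * `|(P *m v) k 0| ^+ 2.
Proof.
rewrite qformE {1}spectral_decomposition -!mulmxA dot_adj ctrmxK dotE.
by apply: eq_bigr => k _; rewrite mul_diag_mx !mxE normCKC mulrCA.
Qed.

Lemma qform_ge_eigen_lb l : (forall a, is_eigenvalue A a -> l <= a) ->
  forall v, l * dot v v <= qform A v.
Proof.
move=> l_lb v; rewrite dotvv_spectral qform_spectral mulr_sumr.
apply: ler_sum => k _; rewrite ler_wpM2r ?exprn_ge0 //.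
exact/l_lb/spectral_diag_eigenvalue.
Qed.

Lemma qform_le_eigen_ub l : (forall a, is_eigenvalue A a -> a <= l) ->
  forall v, qform A v <= l * dot v v.
Proof.
move=> l_ub v; rewrite dotvv_spectral qform_spectral mulr_sumr.
apply: ler_sum => k _; rewrite ler_wpM2r ?exprn_ge0 //.
exact/l_ub/spectral_diag_eigenvalue.
Qed.

End Spectral.

Lemma psd_eigenvalue_ge0 n (A : 'M[C]_n) a :
  is_psd A -> is_eigenvalue A a -> 0 <= a.
Proof.
move=> A_psd [v [v_neq0 Av]]; have := A_psd v.
by rewrite qformE Av dotZr pmulr_lge0 // dotvv_gt0.
Qed.

Lemma qform_ge_eigen_component n (A : 'M[C]_n) l1 lN e v :
    is_hermitian A -> (forall a, is_eigenvalue A a -> l1 <= a) ->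
    dot e e = 1 -> A *m e = lN *: e ->
  l1 * dot v v + `|dot e v| ^+ 2 * (lN - l1) <= qform A v.
Proof.
move=> A_herm l1_lb e1 Ae.
set a := dot e v; set f := v - a *: e.
have ef : dot e f = 0 by rewrite dotBr dotZr e1 mulr1 subrr.
have fe : dot f e = 0 by rewrite dotC ef conjC0.
have eAf : dot e (A *m f) = 0 by rewrite dot_adj A_herm Ae dotZl ef mulr0.
have vE : v = a *: e + f by rewrite addrC subrK.
clearbody f.
have vv : dot v v = `|a| ^+ 2 + dot f f.
  by rewrite vE !(dotDl, dotDr, dotZl, dotZr) e1 ef fe normCK; ring.
have Av : qform A v = `|a| ^+ 2 * lN + qform A f.
  rewrite !qformE vE mulmxDr -scalemxAr Ae scalerA.
  by rewrite !(dotDl, dotDr, dotZl, dotZr) e1 eAf fe normCK; ring.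
rewrite -subr_ge0 vv Av.
have -> : `|a| ^+ 2 * lN + qform A f - (l1 * (`|a| ^+ 2 + dot f f) +
    `|a| ^+ 2 * (lN - l1)) = qform A f - l1 * dot f f by ring.
by rewrite subr_ge0 (qform_ge_eigen_lb (hermitian_normalmx A_herm)).
Qed.

Lemma dem_vec_unimodular n (e : 'cV[C]_n) : unimodular (dem_vec e).
Proof.
move=> i; rewrite mxE /phase; case: eqP => [_|/eqP z_neq0]; first exact: normr1.
by rewrite normrM normfV normr_id mulfV // normr_eq0.
Qed.

Lemma dot_dem_vec n (e : 'cV[C]_n) : dot e (dem_vec e) = \sum_i `|e i 0|.
Proof.
rewrite dotE; apply: eq_bigr => i _; rewrite mxE /phase.
case: eqP => [->|/eqP z_neq0]; first by rewrite normr0 conjC0 mul0r.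
by rewrite mulrA -normCKC expr2 mulfK // normr_eq0.
Qed.

Lemma dot_dem_vec_ge1 n (e : 'cV[C]_n) : dot e e = 1 -> 1 <= dot e (dem_vec e).
Proof.
move=> e1; rewrite dot_dem_vec -e1 dotvv; apply: ler_sum => i _.
have ei_le1 : `|e i 0| <= 1.
  rewrite -(expr_le1 (n := 2)) // -e1 dotvv (bigD1 i) //= lerDl.
  by rewrite sumr_ge0 // => j _; rewrite exprn_ge0.
by rewrite expr2 ler_piMr.
Qed.

Lemma qform_dem_vec_ge n (A : 'M[C]_n) l1 lN e :
    is_hermitian A -> (forall a, is_eigenvalue A a -> l1 <= a) -> l1 <= lN ->
    dot e e = 1 -> A *m e = lN *: e ->
  lN + (n%:R - 1) * l1 <= qform A (dem_vec e).
Proof.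
move=> A_herm l1_lb l1_le_lN e1 Ae.
apply: le_trans (qform_ge_eigen_component _ A_herm l1_lb e1 Ae).
rewrite (unimodular_dotvv (dem_vec_unimodular e)).
set a := dot e (dem_vec e).
have a_ge1 : 1 <= a := dot_dem_vec_ge1 e1.
have -> : `|a| = a by rewrite ger0_norm // (le_trans ler01).
rewrite -subr_ge0.
have -> : l1 * n%:R + a ^+ 2 * (lN - l1) - (lN + (n%:R - 1) * l1)
  = (a ^+ 2 - 1) * (lN - l1) by ring.
by rewrite mulr_ge0 // subr_ge0 // exprn_ege1.
Qed.

End QuadraticForms.

Theorem proposition1 (R : rcfType) (N : nat) (RR : 'M[R[i]]_N)
    (lam1 lamN : R) (e : 'cV[R[i]]_N) (Vopt : R[i]) :
  (0 < N)%N ->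
  is_hermitian RR -> is_psd RR ->
  (* lam1 is the smallest and lamN the largest eigenvalue of RR *)
  is_eigenvalue RR lam1%:C%C ->
  (forall a, is_eigenvalue RR a -> lam1%:C%C <= a) ->
  is_eigenvalue RR lamN%:C%C ->
  (forall a, is_eigenvalue RR a -> a <= lamN%:C%C) ->
  0 < lamN ->
  (* e is a unit-norm eigenvector for lamN *)
  qform 1%:M e = 1 -> RR *m e = lamN%:C%C *: e ->
  (* Vopt = max over s in Omega^N of s^H RR s *)
  (exists2 s, unimodular s & qform RR s = Vopt) ->
  (forall s, unimodular s -> qform RR s <= Vopt) ->
  qform RR (dem_vec e) / Vopt >=
    (lamN + (N - 1)%:R * lam1)%:C%C / (lamN * N%:R)%:C%C.
Proof.
move=> N_gt0 RR_herm RR_psd ev1 l1_lb evN lN_ub lamN_gt0 e1 Ae [s s1 <-] s_max.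
rewrite natrB // rmorphD !rmorphM rmorphB /= !rmorph_nat rmorph1.
set l1 := lam1%:C%C; set lN := lamN%:C%C.
have lN_gt0 : 0 < lN by rewrite ltcR.
have l1_ge0 : 0 <= l1 := psd_eigenvalue_ge0 RR_psd ev1.
have e_unit : dot e e = 1 by rewrite -e1 qformE mul1mx.
have VD_ge := qform_dem_vec_ge RR_herm l1_lb (l1_lb _ evN) e_unit Ae.
have Vopt_le : qform RR s <= lN * N%:R.
  by rewrite -(unimodular_dotvv s1) (qform_le_eigen_ub (hermitian_normalmx RR_herm)).
have num_gt0 : 0 < lN + (N%:R - 1) * l1.
  by rewrite ltr_wpDr // mulr_ge0 // subr_ge0 ler1n.
have Vopt_gt0 : 0 < qform RR s.
  exact: lt_le_trans num_gt0 (le_trans VD_ge (s_max _ (dem_vec_unimodular e))).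
have denom_gt0 : 0 < lN * N%:R by rewrite mulr_gt0 // ltr0n.
apply: ler_pM; [exact: ltW | by rewrite invr_ge0 ltW | exact: VD_ge |].
by rewrite lef_pV2 ?posrE.
Qed.
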